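(* Let $\mathcal{C}$ be a stable M-category with limits of chains, let $\alpha$ be an ordinal, and let $f,g\colon D\to D'$ be natural transformations between $\alpha^{op}$-chains $D,D'$ in $\mathcal{C}$, with induced morphisms $\lim f,\lim g\colon\lim D\to\lim D'$. Then $d(\lim f,\lim g)\le\sup_{\beta<\alpha}d(f_\beta,g_\beta)$.
   Context: An M-category is a category in which every hom-set carries a complete, 1-bounded ultrametric $d$ (i.e. $d\le1$ and $d(x,z)\le\max(d(x,y),d(y,z))$) such that composition is non-expansive with respect to the max-metric on the product of hom-sets. It is stable if for all parallel $f,g\colon A\to B$ and every inhabited jointly monic family $h_i\colon B\to C_i$ ($i\in I$), $d(f,g)=\sup_{i\in I}d(h_i\cdot f,h_i\cdot g)$. ''Limits of chains'' means limits of $\alpha^{op}$-chains (diagrams indexed by the opposite of the ordinal $\alpha$ viewed as a poset) exist for all ordinals $\alpha$. *)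

From mathcomp Require Import all_boot all_order all_algebra.
From mathcomp Require Import boolp classical_sets reals.
Set Implicit Arguments.
Unset Strict Implicit.
Unset Printing Implicit Defensive.
Import Order.TTheory GRing.Theory Num.Theory.
Local Open Scope ring_scope.
Local Open Scope classical_set_scope.

Record Category := {
  Obj :> Type;
  Mor : Obj -> Obj -> Type;
  idmor : forall A, Mor A A;
  compm : forall A B C, Mor B C -> Mor A B -> Mor A C;
  comp_assoc : forall A B C E (h : Mor C E) (g : Mor B C) (f : Mor A B),
      compm h (compm g f) = compm (compm h g) f;
  comp_id_l : forall A B (f : Mor A B), compm (idmor B) f = f;
  comp_id_r : forall A B (f : Mor A B), compm f (idmor A) = f }.

Arguments Mor {c} _ _.
Arguments idmor {c} _.
Arguments compm {c A B C} _ _.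

Definition homdist (R : realType) (C : Category) :=
  forall A B : C, Mor A B -> Mor A B -> R.

Definition cauchy_seq (R : realType) (X : Type) (d : X -> X -> R)
    (u : nat -> X) : Prop :=
  forall eps : R, 0 < eps ->
    exists N : nat, forall m n : nat, (N <= m)%N -> (N <= n)%N -> d (u m) (u n) < eps.

Definition converges_to (R : realType) (X : Type) (d : X -> X -> R)
    (u : nat -> X) (x : X) : Prop :=
  forall eps : R, 0 < eps ->
    exists N : nat, forall n : nat, (N <= n)%N -> d (u n) x < eps.

Definition complete_bounded_ultrametric (R : realType) (X : Type)
    (d : X -> X -> R) : Prop :=
  [/\ (forall x y, 0 <= d x y /\ d x y <= 1),
      (forall x y, d x y = 0 <-> x = y),
      (forall x y, d x y = d y x),
      (forall x y z, d x z <= Num.max (d x y) (d y z)) &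
      (forall u : nat -> X, cauchy_seq d u -> exists x, converges_to d u x)].

Definition is_Mcategory (R : realType) (C : Category) (d : homdist R C) : Prop :=
  (forall A B : C, complete_bounded_ultrametric (@d A B)) /\
  (forall (A B E : C) (g g' : Mor B E) (f f' : Mor A B),
      d A E (compm g f) (compm g' f') <= Num.max (d B E g g') (d A B f f')).

Definition jointly_monic (C : Category) (B : C) (I : Type) (Ci : I -> C)
    (h : forall i, Mor B (Ci i)) : Prop :=
  forall (X : C) (x y : Mor X B), (forall i, compm (h i) x = compm (h i) y) -> x = y.

Definition stable (R : realType) (C : Category) (d : homdist R C) : Prop :=
  forall (A B : C) (I : Type) (Ci : I -> C) (h : forall i, Mor B (Ci i)),
    inhabited I -> jointly_monic h ->
    forall f g : Mor A B,
      d A B f g = sup [set d A (Ci i) (compm (h i) f) (compm (h i) g) | i in [set: I]].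

(* ---------- Ordinals (as well-ordered types) ---------- *)
Record Wellorder := {
  wcar :> Type;
  wlt : wcar -> wcar -> Prop;
  wlt_irrefl : forall x, ~ wlt x x;
  wlt_trans : forall x y z, wlt x y -> wlt y z -> wlt x z;
  wlt_total : forall x y, wlt x y \/ x = y \/ wlt y x;
  wlt_wf : well_founded wlt }.

Definition wle (W : Wellorder) (x y : W) : Prop := wlt x y \/ x = y.

(* ---------- alpha^op-chains: functors W^op -> C ---------- *)
Record Chain (C : Category) (W : Wellorder) := {
  cobj :> W -> C;
  cmap : forall b b' : W, wle b b' -> Mor (cobj b') (cobj b);
  cmap_id : forall b (p : wle b b), cmap p = idmor (cobj b);
  cmap_comp : forall b b' b'' (p : wle b b') (q : wle b' b'') (r : wle b b''),
      cmap r = compm (cmap p) (cmap q) }.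

Arguments cmap {C W} _ {b b'} _.

Definition NatTrans (C : Category) (W : Wellorder) (D D' : Chain C W) :=
  { f : forall b : W, Mor (D b) (D' b) |
    forall (b b' : W) (p : wle b b'),
      compm (f b) (cmap D p) = compm (cmap D' p) (f b') }.

Definition is_cone (C : Category) (W : Wellorder) (D : Chain C W) (L : C)
    (pi : forall b : W, Mor L (D b)) : Prop :=
  forall (b b' : W) (p : wle b b'), compm (cmap D p) (pi b') = pi b.

Definition is_limit (C : Category) (W : Wellorder) (D : Chain C W) (L : C)
    (pi : forall b : W, Mor L (D b)) : Prop :=
  is_cone pi /\
  forall (X : C) (s : forall b : W, Mor X (D b)), is_cone s ->
    exists u : Mor X L, (forall b, compm (pi b) u = s b) /\
      forall u' : Mor X L, (forall b, compm (pi b) u' = s b) -> u' = u.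

Definition has_chain_limits (C : Category) : Prop :=
  forall (W : Wellorder) (D : Chain C W),
    exists (L : C) (pi : forall b : W, Mor L (D b)), is_limit pi.

From mathcomp Require Import all_boot all_order all_algebra.
From mathcomp Require Import boolp classical_sets reals.
Import Order.TTheory GRing.Theory Num.Theory.
Local Open Scope ring_scope.
Local Open Scope classical_set_scope.

(* The limit projections of D' are jointly monic, so stability computes
   d(lim f, lim g) as the supremum over b of d(pi'_b lim f, pi'_b lim g)
   = d(f_b pi_b, g_b pi_b), and each of these is at most d(f_b, g_b) because
   composition is non-expansive.  For the empty ordinal both sides are 0:
   the empty family is jointly monic, so lim f = lim g, and sup set0 = 0. *)

Lemma limit_jointly_monic {C : Category} {W : Wellorder} {D : Chain C W}
    {L : C} {proj : forall b : W, Mor L (D b)} :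
  is_limit proj -> jointly_monic proj.
Proof.
move=> [proj_cone proj_univ] X x y projx_projy.
have projx_cone : is_cone (fun b => compm (proj b) x).
  by move=> b b' p; rewrite comp_assoc proj_cone.
have [u [_ u_uniq]] := proj_univ X _ projx_cone.
by rewrite (u_uniq x (fun b => erefl)) (u_uniq y (fun b => esym (projx_projy b))).
Qed.

Section StableMcategory.

Context {R : realType} {C : Category} {d : homdist R C}.
Hypothesis HM : is_Mcategory d.

Lemma dist_ge0 {A B : C} (x y : Mor A B) : 0 <= d A B x y.
Proof. by case: HM => /(_ A B) [/(_ x y) []]. Qed.

Lemma dist_le1 {A B : C} (x y : Mor A B) : d A B x y <= 1.
Proof. by case: HM => /(_ A B) [/(_ x y) []]. Qed.

Lemma dist_refl {A B : C} (x : Mor A B) : d A B x x = 0.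
Proof. by case: HM => /(_ A B) [_ /(_ x x) [_ ->]]. Qed.

Lemma dist_compr {A B E : C} (g g' : Mor B E) (h : Mor A B) :
  d A E (compm g h) (compm g' h) <= d B E g g'.
Proof.
case: HM => _ /(_ A B E g g' h h) /le_trans; apply.
by rewrite dist_refl (max_l (dist_ge0 _ _)).
Qed.

Hypothesis Hst : stable d.

Lemma dist_le_sup_jointly_monic {A B : C} {I : Type} {Ci : I -> C}
    {h : forall i, Mor B (Ci i)} {F : I -> R} {x y : Mor A B} :
  jointly_monic h -> has_ubound [set F i | i in [set: I]] ->
  (forall i, d A (Ci i) (compm (h i) x) (compm (h i) y) <= F i) ->
  d A B x y <= sup [set F i | i in [set: I]].
Proof.
move=> h_monic F_bounded hxy_le_F.
have [[i0]|I_empty] := pselect (inhabited I).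
  rewrite (Hst _ _ _ _ _ (inhabits i0) h_monic).
  apply: ge_sup => [|_ [i _ <-]].
    by exists (d _ _ (compm (h i0) x) (compm (h i0) y)), i0.
  by apply: le_trans (hxy_le_F i) _; apply: ub_le_sup => //; exists i.
have no_index (i : I) : False by exact: I_empty (inhabits i).
have -> : x = y by apply: h_monic => i; case: (no_index i).
have -> : [set F i | i in [set: I]] = set0.
  by apply/seteqP; split=> [z [i] | z []]; case: (no_index i).
by rewrite dist_refl sup0.
Qed.

End StableMcategory.

Theorem lemmaA1 (R : realType) (C : Category) (d : homdist R C)
    (HM : is_Mcategory d) (Hst : stable d) (Hlim : has_chain_limits C)
    (W : Wellorder) (D D' : Chain C W) (f g : NatTrans D D')
    (L : C) (pi : forall b : W, Mor L (D b)) (HL : is_limit pi)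
    (L' : C) (pi' : forall b : W, Mor L' (D' b)) (HL' : is_limit pi')
    (limf limg : Mor L L')
    (Hf : forall b : W, compm (pi' b) limf = compm (proj1_sig f b) (pi b))
    (Hg : forall b : W, compm (pi' b) limg = compm (proj1_sig g b) (pi b)) :
  d L L' limf limg
    <= sup [set d (D b) (D' b) (proj1_sig f b) (proj1_sig g b) | b in [set: W]].
Proof.
apply: (dist_le_sup_jointly_monic HM Hst (limit_jointly_monic HL')).
  by exists 1 => _ [b _ <-]; exact: dist_le1.
by move=> b; rewrite Hf Hg; exact: dist_compr.
Qed.
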